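(* Let $(E,\mathscr{T},\le)$ be a topological preordered space and let $c_1:E\to c_1E$, $c_2:E\to c_2E$ be preorder compactifications of $E$ with $c_1E$ and $c_2E$ Hausdorff. If $c_1\le c_2$, then the continuous isotone map $C:c_2E\to c_1E$ with $C\circ c_2=c_1$ satisfies $C(c_2E)=c_1E$, $C(c_2(E))=c_1(E)$ and $C(c_2E\setminus c_2(E))=c_1E\setminus c_1(E)$.
   Context: A topological preordered space is a triple $(E,\mathscr{T},\le)$ with $(E,\mathscr{T})$ a topological space and $\le$ a reflexive transitive relation on $E$. A map is isotone if $x\le y\Rightarrow f(x)\le f(y)$. A preorder embedding is a continuous isotone injective map which is a homeomorphism onto its image and whose inverse (on the image, with the induced preorder) is isotone. A preorder compactification of $E$ is a preorder embedding $c:E\to cE$ into a compact topological preordered space $(cE,\mathscr{T}_c,\le_c)$ with $c(E)$ dense in $cE$. For two preorder compactifications, $c_1\le c_2$ means there is a continuous isotone map $C:c_2E\to c_1E$ with $C\circ c_2=c_1$. *)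

From HB Require Import structures.
From mathcomp Require Import all_boot all_order all_algebra.
From mathcomp Require Import all_classical all_reals all_analysis.
Set Implicit Arguments. Unset Strict Implicit. Unset Printing Implicit Defensive.
Local Open Scope classical_set_scope.

(* A preorder (reflexive transitive relation) on a type. A topological
   preordered space is a topologicalType T together with such a relation. *)
Definition is_preorder (T : Type) (le : T -> T -> Prop) : Prop :=
  (forall x, le x x) /\ (forall x y z, le x y -> le y z -> le x z).

Definition isotone (T U : Type) (leT : T -> T -> Prop) (leU : U -> U -> Prop)
  (f : T -> U) : Prop := forall x y, leT x y -> leU (f x) (f y).

(* f is a homeomorphism onto its image (with the subspace topology):
   f is continuous and the image of every open set of T is relatively open
   in range f. *)
Definition open_onto_image (T U : topologicalType) (f : T -> U) : Prop :=
  forall A : set T, open A -> exists B : set U, open B /\ f @` A = B `&` range f.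

Definition preorder_embedding (T U : topologicalType)
  (leT : T -> T -> Prop) (leU : U -> U -> Prop) (f : T -> U) : Prop :=
  [/\ continuous f, isotone leT leU f, injective f,
      open_onto_image f & (forall x y, leU (f x) (f y) -> leT x y)].

Definition preorder_compactification (E cE : topologicalType)
  (le : E -> E -> Prop) (leC : cE -> cE -> Prop) (c : E -> cE) : Prop :=
  [/\ is_preorder leC, compact [set: cE], preorder_embedding le leC c
    & dense (range c)].

From HB Require Import structures.
From mathcomp Require Import all_boot all_order all_algebra.
From mathcomp Require Import all_classical all_reals all_analysis.
Set Implicit Arguments. Unset Strict Implicit. Unset Printing Implicit Defensive.
Local Open Scope classical_set_scope.

(* C is surjective because its image is compact,
   hence closed in the Hausdorff space c1E, and contains the dense set c1(E).
   A point y outside c2(E) cannot be sent to some c1(x): separate y from c2(x)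
   by disjoint open sets U and V; since c1 is an embedding, c1(c2^-1(V)) is
   B ∩ c1(E) for an open B, and density of c2(E) yields c2(e) in U with
   C(c2 e) = c1(e) in B, forcing c2(e) in V as well. *)

Lemma closed_dense_setT (T : topologicalType) (A B : set T) :
  closed A -> dense B -> B `<=` A -> A = [set: T].
Proof.
move=> clA dB BA; apply/seteqP; split=> // z _; apply: contrapT => nAz.
have [w [nAw Bw]] : ~` A `&` B !=set0 by apply: dB; [exists z | rewrite openC].
exact/nAw/BA.
Qed.

Lemma compact_dense_image_setT (T U : topologicalType) (f : T -> U) (A : set U) :
  compact [set: T] -> hausdorff_space U -> continuous f ->
  dense A -> A `<=` range f -> range f = [set: U].
Proof.
move=> cptT hU cf dA Af; apply: closed_dense_setT dA Af.
apply: compact_closed => //; apply: continuous_compact => //.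
exact: continuous_subspaceT.
Qed.

Lemma image_setC_eq (X Y : Type) (f : X -> Y) (A : set X) (B : set Y) :
  range f = [set: Y] -> f @` A = B -> f @` (~` A) `<=` ~` B -> f @` (~` A) = ~` B.
Proof.
move=> surj fAB fAcBc; apply/seteqP; split=> // z nBz.
have [y _ yz] : range f z by rewrite surj.
by exists y => // Ay; apply: nBz; rewrite -fAB -yz; exists y.
Qed.

Section RemainderToRemainder.
Variables (T X Y : topologicalType) (c2 : T -> X) (c1 : T -> Y) (C : X -> Y).
Hypotheses (hX : hausdorff_space X) (c2_cont : continuous c2)
  (c2_dense : dense (range c2)) (C_cont : continuous C)
  (c1_inj : injective c1) (c1_open : open_onto_image c1)
  (Cc2 : C \o c2 = c1).

Lemma remainder_image_notin_range y x : ~ range c2 y -> C y <> c1 x.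
Proof.
move=> ny Cyx.
have Cc2e e : C (c2 e) = c1 e by rewrite -Cc2.
have neq : y != c2 x by apply/eqP => yx; apply: ny; exists x.
move: hX; rewrite open_hausdorff => /(_ _ _ neq)
  [[U V] /= [/set_mem Uy /set_mem Vx] [oU oV /eqP UV0]].
have [B [oB c1VB]] := c1_open (open_comp (fun t _ => @c2_cont t) oV).
have Bx : B (c1 x).
  by have [] : (B `&` range c1) (c1 x) by rewrite -c1VB; exists x.
have [t [[Ut CBt] [e _ et]]] : U `&` C @^-1` B `&` range c2 !=set0.
  apply: c2_dense; first by exists y; split=> //=; rewrite Cyx.
  exact/openI/(open_comp (fun t _ => @C_cont t) oB).
subst t.
have [e' Ve' /c1_inj e'e] : (c1 @` (c2 @^-1` V)) (c1 e).
  by rewrite c1VB; split; [rewrite -Cc2e | exists e].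
subst e'.
by have : (U `&` V) (c2 e) by []; rewrite UV0.
Qed.

Lemma image_remainder_sub : C @` (~` range c2) `<=` ~` range c1.
Proof.
by move=> _ [y ny <-] [x _ /esym]; exact: remainder_image_notin_range.
Qed.

End RemainderToRemainder.

Theorem mainTheorem2 (E cE1 cE2 : topologicalType)
  (le : E -> E -> Prop) (le1 : cE1 -> cE1 -> Prop) (le2 : cE2 -> cE2 -> Prop)
  (c1 : E -> cE1) (c2 : E -> cE2) :
  is_preorder le ->
  preorder_compactification le le1 c1 ->
  preorder_compactification le le2 c2 ->
  hausdorff_space cE1 -> hausdorff_space cE2 ->
  forall C : cE2 -> cE1,
    continuous C -> isotone le2 le1 C -> C \o c2 = c1 ->
    [/\ C @` [set: cE2] = [set: cE1],
        C @` range c2 = range c1 &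
        C @` (~` range c2) = ~` range c1].
Proof.
move=> _ [_ _ [_ _ c1_inj c1_open _] c1_dense]
  [_ cpt2 [c2_cont _ _ _ _] c2_dense] h1 h2 C C_cont _ Cc2.
have CE : C @` range c2 = range c1 by rewrite image_comp Cc2.
have surj : range C = [set: cE1].
  apply: (compact_dense_image_setT cpt2 h1 C_cont c1_dense).
  by rewrite -CE; apply: image_subset.
split=> //; apply: image_setC_eq surj CE _.
exact: image_remainder_sub.
Qed.
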